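(* Let $\mathcal{H}$ be a finite-dimensional Hilbert space, $\ket{h}\in\mathcal{H}$ a unit vector, and $W_0,W_1,\ldots,W_l$ subspaces of $\mathcal{H}$. For $0\le j\le l$ let $\epsilon_j:=\|\Pi_{W_j}\ket h\|_2^2$. Let $0<\alpha<1/3$, let $\mathbf{W}_\alpha\le\tilde{\mathcal{H}}$ be the $\alpha$-tilted span of $W_1,\ldots,W_l$, and let $\mathbf{W}:=\mathbf{W}_\alpha+W_0\le\tilde{\mathcal H}$ (with $W_0$ embedded via the identity embedding $\mathcal H\hookrightarrow\tilde{\mathcal H}$). Let $\epsilon:=\frac{1-\alpha}{\alpha}\sum_{j=1}^l\epsilon_j$. Then $$\max\Big\{\epsilon_0,\,(1-\alpha)\max_{1\le j\le l}\epsilon_j\Big\}\ \le\ \|\Pi_{\mathbf W}\ket h\|_2^2\ \le\ \frac{3l}{\alpha}(\epsilon_0+\epsilon).$$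
   Context: Tilted span: Let $\mathcal{H}_1,\ldots,\mathcal{H}_l$ be Hilbert spaces each of dimension $\dim\mathcal{H}$, and $\tilde{\mathcal{H}}:=\mathcal{H}\oplus\mathcal{H}_1\oplus\cdots\oplus\mathcal{H}_l$ (orthogonal direct sum). Let $\mathcal{T}_j$ be a linear map taking $\mathcal{H}$ isometrically onto $\mathcal{H}_j$. For $0<\alpha<1$ define $\mathcal{T}_{j,\alpha}:=\sqrt{1-\alpha}\,\mathbb{1}_{\mathcal{H}}+\sqrt{\alpha}\,\mathcal{T}_j:\mathcal{H}\to\tilde{\mathcal{H}}$, with $\mathbb{1}_{\mathcal H}$ the identity embedding. The $\alpha$-tilted span of subspaces $W_1,\dots,W_l\le\mathcal H$ is $\mathbf{W}_\alpha:=\sum_{j=1}^l\mathcal{T}_{j,\alpha}(W_j)$. $\Pi_X$ denotes orthogonal projection onto $X$. *)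

(* complex finite-dimensional Hilbert spaces as row vectors
   'rV[C]_n over a numClosedFieldType C (e.g. algC), subspaces as row spaces
   of matrices (mxalgebra), inner product and orthogonal projection from
   mathcomp's spectral.v (dotmx, proj_ortho). *)
From HB Require Import structures.
From mathcomp Require Import all_boot all_order all_algebra.
Set Implicit Arguments.
Unset Strict Implicit.
Unset Printing Implicit Defensive.
Import Order.TTheory GRing.Theory Num.Theory.
Local Open Scope ring_scope.

Section Tilted.
Variable C : numClosedFieldType.

(* The big space  H~ = H (+) H_1 (+) ... (+) H_l  with dim H = n is modelled
   as 'rV_(l.+1 * n) = mxvec of an (l+1) x n matrix: block 0 is H, block k
   (k >= 1) is H_k. *)
Definition blk (n l : nat) (k : 'I_l.+1) (v : 'rV[C]_n) : 'rV[C]_(l.+1 * n) :=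
  mxvec (\matrix_(i < l.+1, j < n) ((i == k)%:R * v 0 j)).

Definition blkmx (n l : nat) (k : 'I_l.+1) : 'M[C]_(n, l.+1 * n) :=
  lin1_mx (@blk n l k).

Definition sqnorm_proj (m p : nat) (U : 'M[C]_(p, m)) (x : 'rV[C]_m) : C :=
  dotmx (x *m proj_ortho U) (x *m proj_ortho U).

(* T_{j,alpha} = sqrt(1-alpha) 1_H + sqrt(alpha) T_j, where T_j : H -> H_j is
   the isometry onto block j given by the unitary matrix Tj followed by the
   block embedding.  Here j : 'I_l stands for the index j+1 in {1..l}. *)
Definition tiltmx (n l : nat) (alpha : C) (Tj : 'M[C]_n) (j : 'I_l) :
  'M[C]_(n, l.+1 * n) :=
  sqrtC (1 - alpha) *: @blkmx n l ord0
  + sqrtC alpha *: (Tj *m @blkmx n l (lift ord0 j)).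

(* alpha-tilted span of W_1..W_l (Ws j = W_{j+1}), isometries T j *)
Definition tilted_span (n l : nat) (alpha : C) (T : 'I_l -> 'M[C]_n)
  (Ws : 'I_l -> 'M[C]_n) : 'M[C]_(l.+1 * n) :=
  (\sum_(j < l) <<Ws j *m tiltmx alpha (T j) j>>)%MS.

End Tilted.

(* A single vector u of the span W shows |Pi_W h|^2 >= |<h,u>|^2 / |u|^2.  Taking
   for u the projection of h onto W0, or the tilted image T_{j,alpha} of the
   projection of h onto W_j (T_{j,alpha} is an isometry and has overlap
   sqrt(1-alpha) eps_j with h) gives the lower bounds.  Conversely every
   u in W is blk0 A + sum_j sqrt(alpha) T_j w_j with A = w0 + sqrt(1-alpha) sum_j w_j,
   so <h,u> = <h,A> and |u|^2 = |A|^2 + alpha sum_j |w_j|^2.  Splitting h into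
   its part q along W0 and the rest, <q,A> is controlled by eps0 |A|^2, while
   h - q only sees the w_j, each contributing at most 2 (eps_j + eps0) |w_j|^2.
   Weighting the two parts by 1 + 2/alpha and 1 + alpha/2 yields the constant
   3l/alpha. *)
From HB Require Import structures.
From mathcomp Require Import all_boot all_order all_algebra ring.
Set Implicit Arguments. Unset Strict Implicit. Unset Printing Implicit Defensive.
Import Order.TTheory GRing.Theory Num.Theory.
Local Open Scope ring_scope.

Local Notation "''[' u , v ]" := (dotmx u v) : ring_scope.
Local Notation "''[' u ]" := (dotmx u u) : ring_scope.

Section Numbers.
Variable R : numFieldType.

Lemma normD_sqr_le (a b s : R) : 0 < s ->
  `|a + b| ^+ 2 <= (1 + s) * `|a| ^+ 2 + (1 + s^-1) * `|b| ^+ 2.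
Proof.
move=> s_gt0; apply: le_trans (_ : (`|a| + `|b|) ^+ 2 <= _).
  by rewrite lerXn2r ?nnegrE ?addr_ge0 ?ler_normD.
rewrite -subr_ge0.
have -> : (1 + s) * `|a| ^+ 2 + (1 + s^-1) * `|b| ^+ 2 - (`|a| + `|b|) ^+ 2
   = (s * `|a| - `|b|) ^+ 2 / s by field; rewrite gt_eqF.
apply: divr_ge0; last exact: ltW.
apply: real_exprn_even_ge0 => //.
by rewrite rpredB ?rpredM ?normr_real ?gtr0_real.
Qed.

Lemma tilted_weight0_le (a L e0 E : R) : 0 < a -> a < 1 -> 1 <= L ->
  0 <= e0 -> 0 <= E -> (1 + 2 / a) * e0 <= 3 * L / a * (e0 + (1 - a) / a * E).
Proof.
move=> a_gt0 a_lt1 L_ge1 e0_ge0 E_ge0; rewrite -subr_ge0.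
have -> : 3 * L / a * (e0 + (1 - a) / a * E) - (1 + 2 / a) * e0 =
    (3 * (L - 1) + (1 - a)) / a * e0 + 3 * L * (1 - a) / (a * a) * E.
  by field; rewrite gt_eqF.
have [a_ge0 a'_ge0] : 0 <= a /\ 0 <= 1 - a by rewrite subr_ge0 !ltW.
have L_ge0 : 0 <= L := le_trans ler01 L_ge1.
apply: addr_ge0; apply: mulr_ge0 => //; apply: divr_ge0; rewrite ?mulr_ge0 //.
by apply: addr_ge0 => //; rewrite mulr_ge0 ?subr_ge0.
Qed.

Lemma tilted_weightS_le (a e0 ej E : R) : 0 < a -> a < 1 ->
  0 <= e0 -> 0 <= ej -> ej <= E ->
  (1 + (2 / a)^-1) * ((1 - a) * (2 * (ej + e0))) <= 3 * (e0 + (1 - a) / a * E).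
Proof.
move=> a_gt0 a_lt1 e0_ge0 ej_ge0 ejE; rewrite -subr_ge0.
have -> : 3 * (e0 + (1 - a) / a * E) - (1 + (2 / a)^-1) * ((1 - a) * (2 * (ej + e0)))
    = (1 + a + a * a) * e0 + 3 * (1 - a) / a * (E - ej)
      + (1 - a) * (1 - a) * (3 + a) / a * ej.
  by field; rewrite gt_eqF.
have [a_ge0 a'_ge0] : 0 <= a /\ 0 <= 1 - a by rewrite subr_ge0 !ltW.
have a_inv : 0 <= a^-1 by rewrite invr_ge0.
apply: addr_ge0; [apply: addr_ge0|]; apply: mulr_ge0 => //.
- by rewrite !addr_ge0 ?mulr_ge0.
- by rewrite !mulr_ge0.
- by rewrite subr_ge0.
- by rewrite mulr_ge0 // !mulr_ge0 // addr_ge0.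
Qed.

End Numbers.

Lemma sub_sumsmx_mulP (F : fieldType) l m p q (A : 'I_l -> 'M[F]_(m, p))
    (M : 'I_l -> 'M[F]_(p, q)) (u : 'rV[F]_q) :
  (u <= \sum_j <<A j *m M j>>)%MS ->
  exists2 w : 'I_l -> 'rV_p, forall j, (w j <= A j)%MS & u = \sum_j w j *m M j.
Proof.
move=> /sub_sumsmxP[v ->].
exists (fun j => v j *m <<A j *m M j>>%MS *m pinvmx (A j *m M j) *m A j).
  by move=> j; exact: submxMl.
apply: eq_bigr => j _; rewrite -mulmxA mulmxKpV //.
by apply: submx_trans (submxMl _ _) _; rewrite genmxE.
Qed.

Section DotProduct.
Variable C : numClosedFieldType.

Lemma normCK_sqrtC (a : C) : 0 <= a -> `|sqrtC a| ^+ 2 = a.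
Proof. by move=> a_ge0; rewrite -normrX sqrtCK ger0_norm. Qed.

Lemma dotmxZr n (a : C) (u v : 'rV[C]_n) : '[u, a *: v] = a^* * '[u, v].
Proof. exact: linearZr_LR. Qed.

Lemma dotmx_unitary n (M : 'M[C]_n) (u v : 'rV[C]_n) : M \is unitarymx ->
  '[u *m M, v *m M] = '[u, v].
Proof.
move=> /unitarymxP MM; rewrite !dotmxE trmx_mul map_mxM mulmxA -(mulmxA u).
by rewrite MM mulmx1.
Qed.

Lemma normC_sum_sqr_le l (z : 'I_l -> C) :
  `|\sum_j z j| ^+ 2 <= l%:R * \sum_j `|z j| ^+ 2.
Proof.
pose u : 'rV[C]_l := \row_j z j; pose v : 'rV[C]_l := const_mx 1.
have : `|'[u, v]| ^+ 2 <= '[u] * '[v] := (CauchySchwarz (@dotmx C l) u v).1.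
have -> : '[u, v] = \sum_j z j.
  by rewrite dotmxE mxE; apply: eq_bigr => j _; rewrite !mxE rmorph1 mulr1.
have -> : '[u] = \sum_j `|z j| ^+ 2.
  by rewrite dotmxE mxE; apply: eq_bigr => j _; rewrite !mxE normCK.
have -> : '[v] = l%:R.
  rewrite dotmxE mxE (eq_bigr (fun _ => 1)) ?sumr_const ?card_ord // => j _.
  by rewrite !mxE rmorph1 mulr1.
by rewrite mulrC.
Qed.

Section Projection.
Variables (m p : nat) (U : 'M[C]_(p, m)).

Lemma dotmx_proj_ortho (x u : 'rV[C]_m) : (u <= U)%MS ->
  '[x *m proj_ortho U, u] = '[x, u].
Proof.
move=> uU; apply/eqP; rewrite eq_sym -subr_eq0 -linearBl /=.
have /orthomx1P xu : (x - x *m proj_ortho U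
    <= orthomx Num.Def.conjC (mx_of_hermitian (hermitian1mx _)) u)%MS.
  by apply: submx_trans (proj_ortho_compl_sub U x) _; rewrite submx_ortho.
by rewrite dotmxE xu mxE.
Qed.

Lemma sqnorm_proj_ge0 x : 0 <= sqnorm_proj U x.
Proof. exact: dnorm_ge0. Qed.

Lemma sqnorm_projE x : sqnorm_proj U x = '[x, x *m proj_ortho U].
Proof. by rewrite /sqnorm_proj dotmx_proj_ortho ?proj_ortho_sub. Qed.

Lemma dotmx_sqr_le_sqnorm_proj x u : (u <= U)%MS ->
  `|'[x, u]| ^+ 2 <= sqnorm_proj U x * '[u].
Proof.
move=> uU; rewrite -dotmx_proj_ortho //.
exact: (CauchySchwarz (@dotmx C m) _ u).1.
Qed.

Lemma sqnorm_proj_ge x u (c : C) : (u <= U)%MS ->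
  `|'[x, u]| ^+ 2 = c * '[u] ^+ 2 -> c * '[u] <= sqnorm_proj U x.
Proof.
move=> uU xu; have [->|u_neq0] := eqVneq u 0.
  by rewrite linear0l mulr0 sqnorm_proj_ge0.
by have := dotmx_sqr_le_sqnorm_proj x uU; rewrite xu expr2 mulrA ler_pM2r ?dnorm_gt0.
Qed.

Lemma sqnorm_proj_le x (K : C) : 0 <= K ->
  (forall u, (u <= U)%MS -> `|'[x, u]| ^+ 2 <= K * '[u]) -> sqnorm_proj U x <= K.
Proof.
move=> K_ge0 xK; set q := x *m proj_ortho U.
have := xK q (proj_ortho_sub U x); rewrite -sqnorm_projE.
have [->|P_neq0] := eqVneq (sqnorm_proj U x) 0; first by [].
rewrite ger0_norm ?sqnorm_proj_ge0 // expr2 ler_pM2r //.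
by rewrite lt_def P_neq0 sqnorm_proj_ge0.
Qed.

End Projection.

Lemma dotmx_sub_proj_sqr_le m p q (U : 'M[C]_(p, m)) (V : 'M[C]_(q, m)) x w :
  (w <= V)%MS -> `|'[x, w] - '[x *m proj_ortho U, w]| ^+ 2
                 <= 2 * (sqnorm_proj V x + sqnorm_proj U x) * '[w].
Proof.
move=> wV; apply: le_trans (normD_sqr_le _ _ ltr01) _.
have -> : 2 * (sqnorm_proj V x + sqnorm_proj U x) * '[w]
    = (1 + 1) * (sqnorm_proj V x * '[w]) + (1 + 1^-1) * (sqnorm_proj U x * '[w]).
  by rewrite invr1; ring.
rewrite normrN lerD // ler_wpM2l ?addr_ge0 ?invr_ge0 //.
  exact: dotmx_sqr_le_sqnorm_proj.
exact: (CauchySchwarz (@dotmx C m) (x *m proj_ortho U) w).1.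
Qed.

Section Blocks.
Variables (n l : nat).

Lemma blk_is_linear k : linear (@blk C n l k).
Proof.
move=> a u v; rewrite /blk -linearP; congr mxvec; apply/matrixP=> i j.
by rewrite !mxE mulrDr mulrCA.
Qed.

HB.instance Definition _ k :=
  GRing.isLinear.Build C _ _ _ (@blk C n l k) (blk_is_linear k).

Lemma blkmxE k (v : 'rV[C]_n) : v *m @blkmx C n l k = blk k v.
Proof. exact: mul_rV_lin1. Qed.

Definition blkpart (k : 'I_l.+1) (y : 'rV[C]_(l.+1 * n)) : 'rV[C]_n :=
  row k (vec_mx y).

Lemma blkpart_is_linear k : linear (blkpart k).
Proof. by move=> a u v; rewrite /blkpart !linearP. Qed.

HB.instance Definition _ k :=
  GRing.isLinear.Build C _ _ _ (blkpart k) (blkpart_is_linear k).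

Lemma blkpart_blk k k' (v : 'rV[C]_n) : blkpart k (blk k' v) = (k == k')%:R *: v.
Proof. by apply/rowP => j; rewrite /blkpart /blk mxvecK !mxE. Qed.

Lemma dotmx_blkpart (y z : 'rV[C]_(l.+1 * n)) :
  '[y, z] = \sum_k '[blkpart k y, blkpart k z].
Proof.
transitivity (\sum_k \sum_j blkpart k y 0 j * (blkpart k z 0 j)^*); last first.
  by apply: eq_bigr => k _; rewrite dotmxE mxE; apply: eq_bigr => j _; rewrite !mxE.
rewrite dotmxE mxE (reindex _ (curry_mxvec_bij _ _)) /= pair_bigA /=.
by apply: eq_bigr => -[k j] _; rewrite !mxE.
Qed.

Lemma dnorm_blkpart (y : 'rV[C]_(l.+1 * n)) :
  '[y] = '[blkpart ord0 y] + \sum_i '[blkpart (lift ord0 i) y].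
Proof. by rewrite dotmx_blkpart big_ord_recl. Qed.

Lemma dotmx_blk0l (v : 'rV[C]_n) (y : 'rV[C]_(l.+1 * n)) :
  '[blk ord0 v, y] = '[v, blkpart ord0 y].
Proof.
rewrite dotmx_blkpart big_ord_recl blkpart_blk eqxx scale1r big1 ?addr0 // => i _.
by rewrite blkpart_blk scale0r linear0l.
Qed.

Section Tilt.
Variables (alpha : C) (T : 'I_l -> 'M[C]_n).

Lemma tiltmxE j (w : 'rV[C]_n) : w *m tiltmx alpha (T j) j =
  sqrtC (1 - alpha) *: blk ord0 w + sqrtC alpha *: blk (lift ord0 j) (w *m T j).
Proof. by rewrite /tiltmx mulmxDr -!scalemxAr mulmxA !blkmxE. Qed.

Lemma blkpart0_tiltmx j w :
  blkpart ord0 (w *m tiltmx alpha (T j) j) = sqrtC (1 - alpha) *: w.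
Proof.
by rewrite tiltmxE linearD !linearZ /= !blkpart_blk scale1r scale0r scaler0 addr0.
Qed.

Lemma blkpartS_tiltmx i j w : blkpart (lift ord0 i) (w *m tiltmx alpha (T j) j)
  = (i == j)%:R *: (sqrtC alpha *: (w *m T j)).
Proof.
rewrite tiltmxE linearD !linearZ /= !blkpart_blk scale0r scaler0 add0r.
by rewrite (inj_eq (@lift_inj _ ord0)).
Qed.

Definition tilt_comb (w0 : 'rV[C]_n) (w : 'I_l -> 'rV[C]_n) : 'rV[C]_(l.+1 * n) :=
  blk ord0 w0 + \sum_j w j *m tiltmx alpha (T j) j.

Lemma blkpart0_tilt_comb w0 w :
  blkpart ord0 (tilt_comb w0 w) = w0 + sqrtC (1 - alpha) *: \sum_j w j.
Proof.
rewrite linearD linear_sum /= blkpart_blk scale1r scaler_sumr; congr (_ + _).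
by apply: eq_bigr => j _; rewrite blkpart0_tiltmx.
Qed.

Lemma blkpartS_tilt_comb w0 w i :
  blkpart (lift ord0 i) (tilt_comb w0 w) = sqrtC alpha *: (w i *m T i).
Proof.
rewrite linearD linear_sum /= blkpart_blk scale0r add0r (bigD1 i) //= big1 ?addr0.
  by rewrite blkpartS_tiltmx eqxx scale1r.
by move=> j /negPf ji; rewrite blkpartS_tiltmx eq_sym ji scale0r.
Qed.

Hypotheses (alpha_ge0 : 0 <= alpha) (alpha_le1 : alpha <= 1).
Hypothesis T_unitary : forall j, T j \is unitarymx.

Lemma dnorm_tiltmx j w : '[w *m tiltmx alpha (T j) j] = '[w].
Proof.
rewrite dnorm_blkpart blkpart0_tiltmx (bigD1 j) //= big1 ?addr0; last first.
  by move=> i /negPf ij; rewrite blkpartS_tiltmx ij scale0r linear0l.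
rewrite blkpartS_tiltmx eqxx scale1r !dnormZ /= dotmx_unitary //.
by rewrite !normCK_sqrtC ?subr_ge0 // -mulrDl subrK mul1r.
Qed.

Lemma dnorm_tilt_comb w0 w :
  '[tilt_comb w0 w] = '[w0 + sqrtC (1 - alpha) *: \sum_j w j] + alpha * \sum_j '[w j].
Proof.
rewrite dnorm_blkpart blkpart0_tilt_comb mulr_sumr; congr (_ + _).
apply: eq_bigr => i _.
by rewrite blkpartS_tilt_comb dnormZ /= dotmx_unitary // normCK_sqrtC.
Qed.

End Tilt.

End Blocks.

End DotProduct.

Section TiltedSpan.
Variables (C : numClosedFieldType) (n l : nat) (h : 'rV[C]_n).
Variables (W0 : 'M[C]_n) (Ws : 'I_l -> 'M[C]_n) (T : 'I_l -> 'M[C]_n) (alpha : C).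
Hypothesis T_unitary : forall j, T j \is unitarymx.
Hypotheses (alpha_gt0 : 0 < alpha) (alpha_lt1 : alpha < 1).

Local Notation Wb := (tilted_span alpha T Ws + W0 *m @blkmx C n l ord0)%MS.
Local Notation blk0 := (@blk C n l ord0).
Local Notation hb := (h *m @blkmx C n l ord0).
Local Notation eps0 := (sqnorm_proj W0 h).
Local Notation epsj j := (sqnorm_proj (Ws j) h).

Let alpha_ge0 : 0 <= alpha := ltW alpha_gt0.
Let alpha_le1 : alpha <= 1 := ltW alpha_lt1.

Lemma sub_tilted_span_addsP u : (u <= Wb)%MS ->
  exists w0, exists2 w, (w0 <= W0)%MS /\ (forall j, (w j <= Ws j)%MS)
                      & u = tilt_comb alpha T w0 w.
Proof.
move=> /sub_addsmxP[[v1 v2] /= ->].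
have [w wW ->] := sub_sumsmx_mulP (submxMl v1 (tilted_span alpha T Ws)).
exists (v2 *m W0), w; first by split; [exact: submxMl | exact: wW].
by rewrite /tilt_comb mulmxA blkmxE addrC.
Qed.

Lemma sqnorm_proj_W0_le : eps0 <= sqnorm_proj Wb hb.
Proof.
set q := h *m proj_ortho W0.
have qWb : (blk0 q <= Wb)%MS.
  rewrite -blkmxE; apply: submx_trans (submxMr _ (proj_ortho_sub W0 h)) _.
  exact: addsmxSr.
have dq : '[blk0 q] = eps0 by rewrite dotmx_blk0l blkpart_blk eqxx scale1r.
have hq : '[blk0 h, blk0 q] = eps0.
  by rewrite dotmx_blk0l blkpart_blk eqxx scale1r -sqnorm_projE.
rewrite blkmxE -dq -[X in X <= _]mul1r; apply: sqnorm_proj_ge qWb _.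
by rewrite hq dq ger0_norm ?sqnorm_proj_ge0 // mul1r.
Qed.

Lemma sqnorm_proj_Ws_le j : (1 - alpha) * epsj j <= sqnorm_proj Wb hb.
Proof.
set u := h *m proj_ortho (Ws j) *m tiltmx alpha (T j) j.
have uWb : (u <= Wb)%MS.
  apply: submx_trans (submxMr _ (proj_ortho_sub (Ws j) h)) _.
  apply: submx_trans (addsmxSl _ _); apply: (sumsmx_sup j) => //.
  by rewrite genmxE.
have du : '[u] = epsj j by rewrite dnorm_tiltmx.
have hu : '[blk0 h, u] = (sqrtC (1 - alpha))^* * epsj j.
  by rewrite dotmx_blk0l blkpart0_tiltmx dotmxZr -sqnorm_projE.
rewrite blkmxE -du; apply: sqnorm_proj_ge uWb _.
rewrite hu du normrM norm_conjC exprMn normCK_sqrtC ?subr_ge0 //.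
by rewrite ger0_norm ?sqnorm_proj_ge0.
Qed.

Lemma dotmx_tilt_comb_sqr_le w0 w : (w0 <= W0)%MS -> (forall j, (w j <= Ws j)%MS) ->
  `|'[h, w0 + sqrtC (1 - alpha) *: \sum_j w j]| ^+ 2
  <= (1 + 2 / alpha) * (eps0 * '[w0 + sqrtC (1 - alpha) *: \sum_j w j])
     + (1 + (2 / alpha)^-1)
       * ((1 - alpha) * (l%:R * \sum_j 2 * (epsj j + eps0) * '[w j])).
Proof.
move=> w0W wW; set A := w0 + _; set q := h *m proj_ortho W0.
(* [h - q] is orthogonal to [W0], so it only sees the tilted part of [A]. *)
have hA : '[h, A] = '[q, A]
    + (sqrtC (1 - alpha))^* * \sum_j ('[h, w j] - '[q, w j]).
  have hw0 : '[h, w0] = '[q, w0] by rewrite dotmx_proj_ortho.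
  by rewrite /A !linearDr /= !dotmxZr !linear_sumr /= hw0 sumrB; ring.
have s_gt0 : 0 < 2 / alpha by rewrite divr_gt0 ?ltr0n.
rewrite hA; apply: le_trans (normD_sqr_le _ _ s_gt0) _; apply: lerD.
  apply: ler_wpM2l; first by rewrite addr_ge0 ?ltW.
  exact: (CauchySchwarz (@dotmx C n) (h *m proj_ortho W0) A).1.
apply: ler_wpM2l; first by rewrite addr_ge0 ?invr_ge0 ?ltW.
rewrite normrM exprMn norm_conjC normCK_sqrtC ?subr_ge0 // ler_wpM2l ?subr_ge0 //.
apply: le_trans (normC_sum_sqr_le _) _; rewrite ler_wpM2l ?ler0n //.
by apply: ler_sum => j _; apply: dotmx_sub_proj_sqr_le.
Qed.

Lemma sqnorm_proj_tilted_le : (0 < l)%N ->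
  sqnorm_proj Wb hb <= 3 * l%:R / alpha * (eps0 + (1 - alpha) / alpha * \sum_j epsj j).
Proof.
move=> l_gt0; set E := \sum_j epsj j; set K := 3 * l%:R / alpha * _.
have e0_ge0 : 0 <= eps0 := sqnorm_proj_ge0 _ _.
have ej_ge0 j : 0 <= epsj j := sqnorm_proj_ge0 _ _.
have ejE j : epsj j <= E by rewrite /E (bigD1 j) //= lerDl sumr_ge0.
have E_ge0 : 0 <= E by apply: sumr_ge0.
have L_ge1 : 1 <= l%:R :> C by rewrite ler1n.
have K_ge0 : 0 <= K.
  have [a_ge0 a'_ge0] : 0 <= alpha /\ 0 <= 1 - alpha by rewrite subr_ge0 !ltW.
  by rewrite /K !mulr_ge0 ?addr_ge0 ?mulr_ge0 ?invr_ge0.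
apply: sqnorm_proj_le K_ge0 _ => u /sub_tilted_span_addsP[w0 [w [w0W wW] ->]].
rewrite blkmxE dotmx_blk0l blkpart0_tilt_comb dnorm_tilt_comb //.
apply: le_trans (dotmx_tilt_comb_sqr_le w0W wW) _.
rewrite mulrDr; apply: lerD.
  by rewrite mulrA ler_wpM2r ?dnorm_ge0 // tilted_weight0_le.
rewrite !mulr_sumr; apply: ler_sum => j _.
have lN_ge0 : 0 <= l%:R * '[w j] by rewrite mulr_ge0 ?ler0n ?dnorm_ge0.
have := tilted_weightS_le alpha_gt0 alpha_lt1 e0_ge0 (ej_ge0 j) (ejE j).
move=> /(ler_wpM2r lN_ge0).
by congr (_ <= _); rewrite /K; field; rewrite gt_eqF.
Qed.

End TiltedSpan.

Theorem corollary1 (C : numClosedFieldType) (n l : nat) (hl : (0 < l)%N)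
  (h : 'rV[C]_n) (hunit : dotmx h h = 1)
  (W0 : 'M[C]_n) (Ws : 'I_l -> 'M[C]_n)
  (T : 'I_l -> 'M[C]_n) (hT : forall j, T j \is unitarymx)
  (alpha : C) (ha0 : 0 < alpha) (ha1 : alpha < 3^-1) :
  let eps0 := sqnorm_proj W0 h in
  let epsj := fun j : 'I_l => sqnorm_proj (Ws j) h in
  let Wb := (tilted_span alpha T Ws + W0 *m @blkmx C n l ord0)%MS in
  let P := sqnorm_proj Wb (h *m @blkmx C n l ord0) in
  let eps := (1 - alpha) / alpha * \sum_(j < l) epsj j in
  [/\ eps0 <= P,
      (forall j : 'I_l, (1 - alpha) * epsj j <= P)
    & P <= (3 * l%:R) / alpha * (eps0 + eps)].
Proof.
move=> eps0 epsj Wb P eps.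
have alpha_lt1 : alpha < 1 by apply: lt_le_trans ha1 _; rewrite invf_le1 ?ler1n.
split.
- exact: sqnorm_proj_W0_le.
- exact: sqnorm_proj_Ws_le.
- exact: sqnorm_proj_tilted_le.
Qed.
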